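(* Let $G$ be a group, let $p,q\geq 1$ be integers, and let $A\in M_{2p,2q}(\mathbb{C}G)$ be written as a block matrix $$A=\begin{pmatrix} A_{1,1} & A_{1,2}\\ A_{2,1} & A_{2,2}\end{pmatrix}$$ with each block of size $p\times q$. Suppose that $A_{1,1}$ and $A_{2,2}$ both have constant row sum, equal to the same element $r_1\in\mathbb{C}G$, and both have constant column sum, equal to the same element $c_1\in\mathbb{C}G$; and that $A_{1,2}$ and $A_{2,1}$ both have constant row sum, equal to the same element $r_2\in\mathbb{C}G$, and both have constant column sum, equal to the same element $c_2\in\mathbb{C}G$. Then $Q_p A Q_q = A$, where for a positive integer $m$ $$Q_m=\begin{pmatrix} I_m-\frac1m J_m & \frac1m J_m\\ \frac1m J_m & I_m-\frac1m J_m\end{pmatrix}\in M_{2m}(\mathbb{C}G).$$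
   Context: $\mathbb{C}G$ denotes the complex group algebra of $G$, with neutral element $1_G$; $M_{a,b}(\mathbb{C}G)$ is the set of $a\times b$ matrices with entries in $\mathbb{C}G$. $I_m\in M_m(\mathbb{C}G)$ is the identity matrix (diagonal entries $1_G$), and $J_m\in M_m(\mathbb{C}G)$ is the matrix all of whose entries are $1_G$. ''Constant row sum $r$'' means every row of the block sums (in $\mathbb{C}G$) to $r$; similarly for column sums. *)

(* Complex group algebra C[G] of an arbitrary (possibly
   infinite) group G, built as the algebra of finitely supported functions
   G -> C on top of multinomials' [malg] carrier, with convolution product. *)
From HB Require Import structures.
From mathcomp Require Import all_boot all_algebra.
From mathcomp Require Import finmap.
From mathcomp Require Import Rstruct.
From mathcomp.real_closed Require Import complex.
From mathcomp.multinomials Require Import xfinmap monalg.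

Set Implicit Arguments.
Unset Strict Implicit.
Unset Printing Implicit Defensive.

Import GRing.Theory.

Local Open Scope fset.
Local Open Scope ring_scope.

HB.mixin Record Choice_isGrp G of Choice G := {
  gone : G;
  gmul : G -> G -> G;
  ginv : G -> G;
  gmulA : associative gmul;
  gmul1g : left_id gone gmul;
  gmulg1 : right_id gone gmul;
  gmulVg : left_inverse gone ginv gmul
}.

#[short(type="grpType")]
HB.structure Definition Grp := { G of Choice G & Choice_isGrp G }.

Definition Cplx : numClosedFieldType := (Rdefinitions.R)[i].

(* Ring structure of the monoid algebra {malg R[G]} for a group G
   (adapted verbatim from multinomials' monalg.v, whose ring instance
   requires a "monomType"; a group is not one since it has units).     *)
Section GrpAlgRing.
Context (K : grpType) (R : ringType).

Implicit Types (g : {malg R[K]}) (k l : K).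

Local Notation "1%G" := (@gone K).
Local Notation "x *G y" := (@gmul K x y) (at level 40, left associativity).

Definition ggone : {malg R[K]} := << 1%G >>.

Definition ggmul g1 g2 : {malg R[K]} :=
  \sum_(k1 <- msupp g1) \sum_(k2 <- msupp g2)
     << g1@_k1 * g2@_k2 *g (k1 *G k2) >>.

Lemma ggmull g1 g2 :
  ggmul g1 g2 = \sum_(k1 <- msupp g1) \sum_(k2 <- msupp g2)
     << g1@_k1 * g2@_k2 *g (k1 *G k2) >>.
Proof. by []. Qed.

Lemma ggmulr g1 g2 :
  ggmul g1 g2 = \sum_(k2 <- msupp g2) \sum_(k1 <- msupp g1)
     << g1@_k1 * g2@_k2 *g (k1 *G k2) >>.
Proof. by rewrite ggmull exchange_big. Qed.

Lemma ggmullw (d1 d2 : {fset K}) g1 g2 :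
  msupp g1 `<=` d1 -> msupp g2 `<=` d2 ->
  ggmul g1 g2 = \sum_(k1 <- d1) \sum_(k2 <- d2)
     << g1@_k1 * g2@_k2 *g (k1 *G k2) >>.
Proof.
move=> le_d1 le_d2; rewrite ggmull (big_fset_incl _ le_d1) /=.
  apply/eq_bigr=> k1 _; apply/big_fset_incl => // k _ /mcoeff_outdom ->.
  by rewrite mulr0 monalgU0.
move=> k _ /mcoeff_outdom g1k.
by rewrite big1 => // k' _; rewrite g1k mul0r monalgU0.
Qed.

Lemma ggmulrw (d1 d2 : {fset K}) g1 g2 : msupp g1 `<=` d1 -> msupp g2 `<=` d2
  -> ggmul g1 g2 = \sum_(k2 <- d2) \sum_(k1 <- d1)
     << g1@_k1 * g2@_k2 *g (k1 *G k2) >>.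
Proof. by move=> le_d1 le_d2; rewrite (ggmullw le_d1 le_d2) exchange_big. Qed.

Definition ggmullwl (d1 : {fset K}) {g1 g2} (le : msupp g1 `<=` d1) :=
  @ggmullw _ _ g1 g2 le (fsubset_refl _).

Definition ggmulrwl (d2 : {fset K}) {g1 g2} (le : msupp g2 `<=` d2) :=
  @ggmulrw _ _ g1 g2 (fsubset_refl _) le.

Lemma ggmul0g : left_zero 0 ggmul.
Proof. by move=> g; rewrite ggmull msupp0 big_seq_fset0. Qed.

Lemma ggmulg0 : right_zero 0 ggmul.
Proof. by move=> g; rewrite ggmulr msupp0 big_seq_fset0. Qed.

Lemma ggmulUg c k g :
  ggmul << c *g k >> g = \sum_(k' <- msupp g) << c * g@_k' *g k *G k' >>.
Proof.
rewrite (ggmullw msuppU_le (fsubset_refl _)) big_seq_fset1.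
by apply/eq_bigr => k' _; rewrite mcoeffUU.
Qed.

Lemma ggmulgU c k g :
  ggmul g << c *g k >> = \sum_(k' <- msupp g) << g@_k' * c *g k' *G k >>.
Proof.
rewrite (ggmulrw (fsubset_refl _) msuppU_le) big_seq_fset1.
by apply/eq_bigr=> k' _; rewrite mcoeffUU.
Qed.

Lemma ggmulUU c1 c2 k1 k2 :
  ggmul << c1 *g k1 >> << c2 *g k2 >> = << c1 * c2 *g k1 *G k2 >>.
Proof. by rewrite (ggmulrw msuppU_le msuppU_le) !big_seq_fset1 !mcoeffUU. Qed.

Lemma ggmulEl1 g1 g2 :
  ggmul g1 g2 = \sum_(k1 <- msupp g1) ggmul << g1@_k1 *g k1 >> g2.
Proof. by apply/eq_bigr=> k _; rewrite ggmulUg. Qed.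

Lemma ggmulEr1 g1 g2 :
  ggmul g1 g2 = \sum_(k2 <- msupp g2) ggmul g1 << g2@_k2 *g k2 >>.
Proof. by rewrite ggmulr; apply/eq_bigr=> k _; rewrite ggmulgU. Qed.

Lemma ggmul1g : left_id ggone ggmul.
Proof.
move=> g; rewrite ggmulUg [RHS]monalgE.
by apply/eq_bigr=> kg _; rewrite mul1r gmul1g.
Qed.

Lemma ggmulg1 : right_id ggone ggmul.
Proof.
move=> g; rewrite ggmulgU [RHS]monalgE.
by apply/eq_bigr=> k _; rewrite mulr1 gmulg1.
Qed.

Lemma ggmulgDl : left_distributive ggmul +%R.
Proof.
move=> g1 g2 g; rewrite [in RHS](ggmullwl (fsubsetUl _ (msupp g2))).
rewrite [in RHS](ggmullwl (fsubsetUr (msupp g1) _)) (ggmullwl (msuppD_le _ _)).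
rewrite -big_split /=; apply/eq_bigr=> k1 _.
rewrite -big_split /=; apply/eq_bigr=> k2 _.
by rewrite mcoeffD mulrDl monalgUD.
Qed.

Lemma ggmulgDr : right_distributive ggmul +%R.
Proof.
move=> g g1 g2; rewrite [in RHS](ggmulrwl (fsubsetUl _ (msupp g2))).
rewrite [in RHS](ggmulrwl (fsubsetUr (msupp g1) _)) (ggmulrwl (msuppD_le _ _)).
rewrite -big_split /=; apply/eq_bigr => k1 _.
rewrite -big_split /=; apply/eq_bigr => k2 _.
by rewrite mcoeffD mulrDr monalgUD.
Qed.

Lemma ggmulA : associative ggmul.
Proof.
move=> g1 g2 g3.
rewrite [RHS](big_morph (ggmul^~ _) (fun _ _ => ggmulgDl _ _ _) (ggmul0g _)).
rewrite ggmulEl1; apply/eq_bigr=> k1 _.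
rewrite [LHS](big_morph (ggmul _) (fun _ _ => ggmulgDr _ _ _) (ggmulg0 _)).
rewrite [RHS](big_morph (ggmul^~ _) (fun _ _ => ggmulgDl _ _ _) (ggmul0g _)).
apply/eq_bigr=> k2 _.
rewrite [LHS](big_morph (ggmul _) (fun _ _ => ggmulgDr _ _ _) (ggmulg0 _)).
by rewrite ggmulEr1; apply/eq_bigr=> k3 _; rewrite !ggmulUU mulrA gmulA.
Qed.

Lemma ggoner_eq0 : ggone != 0.
Proof. by apply/eqP/malgP=> /(_ 1%G) /eqP; rewrite !mcoeffsE oner_eq0. Qed.

End GrpAlgRing.

(* The group algebra carrier, as a fresh type so that its ring instance
   does not interfere with multinomials' own instances.                 *)
Definition grpalg (R : ringType) (G : grpType) := {malg R[G]}.
HB.instance Definition _ (R : ringType) (G : grpType) :=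
  GRing.Lmodule.on (grpalg R G).
HB.instance Definition _ (R : ringType) (G : grpType) :=
  GRing.Zmodule_isRing.Build (grpalg R G)
    (@ggmulA G R) (@ggmul1g G R) (@ggmulg1 G R)
    (@ggmulgDl G R) (@ggmulgDr G R) (@ggoner_eq0 G R).

Definition CG (G : grpType) : ringType := grpalg Cplx G.

Definition const_row_sum (G : grpType) (a b : nat) (B : 'M[CG G]_(a, b))
    (r : CG G) : Prop :=
  forall i : 'I_a, \sum_(j < b) B i j = r.

Definition const_col_sum (G : grpType) (a b : nat) (B : 'M[CG G]_(a, b))
    (c : CG G) : Prop :=
  forall j : 'I_b, \sum_(i < a) B i j = c.

Definition Jmx (G : grpType) (m : nat) : 'M[CG G]_m := const_mx 1.

Definition Jmx_div (G : grpType) (m : nat) : 'M[CG G]_m :=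
  map_mx (fun x : CG G => ((m%:R : Cplx)^-1) *: x) (Jmx G m).

Definition Qmx (G : grpType) (m : nat) : 'M[CG G]_(m + m) :=
  block_mx (1%:M - Jmx_div G m) (Jmx_div G m)
           (Jmx_div G m) (1%:M - Jmx_div G m).

(* Write P for the averaging matrix (1/m) J_m.  Then Q_m = 1 - D with
   D = [[P, -P], [-P, P]], and P^2 = P makes Q_m an involution.  The
   hypotheses say that P_p A_ij and A_ij P_q are both the constant matrix
   with entry c_1/p for the diagonal blocks and c_2/p for the off-diagonal
   ones (c/p = r/q by summing the entries of a block in two ways).  This
   gives Q_p A = A Q_q, hence Q_p A Q_q = A Q_q^2 = A. *)
From HB Require Import structures.
From mathcomp Require Import all_boot all_algebra.
From mathcomp Require Import finmap.
From mathcomp.multinomials Require Import monalg.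

Set Implicit Arguments.
Unset Strict Implicit.
Unset Printing Implicit Defensive.

Import GRing.Theory Num.Theory.
Local Open Scope ring_scope.

Lemma monalgUZ (R : nzRingType) (K : choiceType) (a b : R) (k : K) :
  << a * b *g k >> = a *: (<< b *g k >> : {malg R[K]}).
Proof. by apply/malgP => k'; rewrite mcoeffZ !mcoeffU mulrnAr. Qed.

Section GroupAlgebra.
Variables (R : comNzRingType) (G : grpType).

Lemma grpalg_scalerAl (a : R) (x y : grpalg R G) : a *: (x * y) = (a *: x) * y.
Proof.
rewrite /GRing.mul /= [RHS](ggmullw (msuppZ_le a x) (fsubset_refl _)) ggmull.
rewrite scaler_sumr; apply: eq_bigr => k1 _; rewrite scaler_sumr.
by apply: eq_bigr => k2 _; rewrite (mcoeffZ a x) -mulrA [RHS]monalgUZ.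
Qed.

Lemma grpalg_scalerAr (a : R) (x y : grpalg R G) : a *: (x * y) = x * (a *: y).
Proof.
rewrite /GRing.mul /= [RHS](ggmullw (fsubset_refl _) (msuppZ_le a y)) ggmull.
rewrite scaler_sumr; apply: eq_bigr => k1 _; rewrite scaler_sumr.
by apply: eq_bigr => k2 _; rewrite (mcoeffZ a y) mulrCA [RHS]monalgUZ.
Qed.

HB.instance Definition _ :=
  GRing.Lmodule_isLalgebra.Build R (grpalg R G) grpalg_scalerAl.
HB.instance Definition _ :=
  GRing.Lalgebra_isAlgebra.Build R (grpalg R G) grpalg_scalerAr.

End GroupAlgebra.

Section BlockReflection.
Variable R : pzRingType.

Definition Qmx_of m (P : 'M[R]_m) : 'M[R]_(m + m) :=
  block_mx (1%:M - P) P P (1%:M - P).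

Lemma Qmx_of_invol m (P : 'M[R]_m) :
  P *m P = P -> Qmx_of P *m Qmx_of P = 1%:M.
Proof.
move=> idemP; rewrite mulmx_block scalar_mx_block.
have PQ0 : P *m (1%:M - P) = 0 by rewrite mulmxBr mulmx1 idemP subrr.
have QP0 : (1%:M - P) *m P = 0 by rewrite mulmxBl mul1mx idemP subrr.
have QQ : (1%:M - P) *m (1%:M - P) = 1%:M - P by rewrite mulmxBr mulmx1 QP0 subr0.
by rewrite PQ0 QP0 QQ idemP addr0 subrK addrC subrK.
Qed.

Lemma Qmx_of_mul_commute p q (Pp : 'M[R]_p) (Pq : 'M[R]_q)
    (A : 'M[R]_(p + p, q + q)) (K1 K2 : 'M[R]_(p, q)) :
  Pp *m ulsubmx A = K1 -> Pp *m drsubmx A = K1 ->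
  ulsubmx A *m Pq = K1 -> drsubmx A *m Pq = K1 ->
  Pp *m ursubmx A = K2 -> Pp *m dlsubmx A = K2 ->
  ursubmx A *m Pq = K2 -> dlsubmx A *m Pq = K2 ->
  Qmx_of Pp *m A = A *m Qmx_of Pq.
Proof.
move=> l11 l22 r11 r22 l12 l21 r12 r21.
rewrite -[A]submxK !mulmx_block !mulmxBl !mulmxBr !mul1mx !mulmx1.
rewrite l11 l22 r11 r22 l12 l21 r12 r21.
by congr block_mx; rewrite addrC.
Qed.

Lemma Qmx_of_conj p q (Pp : 'M[R]_p) (Pq : 'M[R]_q) (A : 'M[R]_(p + p, q + q)) :
  Pq *m Pq = Pq -> Qmx_of Pp *m A = A *m Qmx_of Pq ->
  Qmx_of Pp *m A *m Qmx_of Pq = A.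
Proof. by move=> idemPq ->; rewrite -mulmxA Qmx_of_invol ?mulmx1. Qed.

End BlockReflection.

Section Averaging.
Variables (F : numFieldType) (A : algType F).

Definition avg_mx m : 'M[A]_m := const_mx (m%:R^-1 *: 1).

Lemma mul_avg_mx m n (B : 'M[A]_(m, n)) c :
  (forall j, \sum_i B i j = c) -> avg_mx m *m B = const_mx (m%:R^-1 *: c).
Proof.
move=> colB; apply/matrixP => i j; rewrite !mxE -(colB j) scaler_sumr.
by apply: eq_bigr => k _; rewrite mxE -scalerAl mul1r.
Qed.

Lemma mul_mx_avg m n (B : 'M[A]_(m, n)) r :
  (forall i, \sum_j B i j = r) -> B *m avg_mx n = const_mx (n%:R^-1 *: r).
Proof.
move=> rowB; apply/matrixP => i j; rewrite !mxE -(rowB i) scaler_sumr.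
by apply: eq_bigr => k _; rewrite mxE -scalerAr mulr1.
Qed.

Lemma avg_mx_idem m : (0 < m)%N -> avg_mx m *m avg_mx m = avg_mx m.
Proof.
move=> m_gt0; rewrite (mul_avg_mx (c := 1)) // => j.
rewrite (eq_bigr (fun=> m%:R^-1 *: 1)) => [|i _]; last by rewrite mxE.
by rewrite sumr_const card_ord scalerMnl -mulr_natr mulVf ?scale1r ?pnatr_eq0 -?lt0n.
Qed.

Lemma row_col_sum_scale m n (B : 'M[A]_(m, n)) r c :
  (forall i, \sum_j B i j = r) -> (forall j, \sum_i B i j = c) ->
  m%:R *: r = n%:R *: c.
Proof.
move=> rowB colB; rewrite !scaler_nat.
transitivity (\sum_(i < m) \sum_(j < n) B i j).
  by rewrite (eq_bigr _ (fun i _ => rowB i)) sumr_const card_ord.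
by rewrite exchange_big (eq_bigr _ (fun j _ => colB j)) sumr_const card_ord.
Qed.

Lemma avg_col_row_sum m n (B : 'M[A]_(m, n)) r c :
  (0 < m)%N -> (0 < n)%N ->
  (forall i, \sum_j B i j = r) -> (forall j, \sum_i B i j = c) ->
  m%:R^-1 *: c = n%:R^-1 *: r.
Proof.
move=> m_gt0 n_gt0 rowB colB.
have natr_neq0 k : (0 < k)%N -> k%:R != 0 :> F by rewrite pnatr_eq0 -lt0n.
have -> : c = n%:R^-1 *: (m%:R *: r).
  by rewrite (row_col_sum_scale rowB colB) scalerA mulVf ?scale1r ?natr_neq0.
by rewrite !scalerA mulrAC mulVf ?mul1r ?natr_neq0.
Qed.

End Averaging.

Lemma QmxE (G : grpType) m : Qmx G m = Qmx_of (avg_mx (CG G) m).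
Proof. by congr Qmx_of; apply/matrixP => i j; rewrite !mxE. Qed.

Theorem mainTheorem1 (G : grpType) (p q : nat) (hp : (0 < p)%N) (hq : (0 < q)%N)
    (A : 'M[CG G]_(p + p, q + q)) (r1 c1 r2 c2 : CG G) :
    const_row_sum (ulsubmx A) r1 -> const_row_sum (drsubmx A) r1 ->
    const_col_sum (ulsubmx A) c1 -> const_col_sum (drsubmx A) c1 ->
    const_row_sum (ursubmx A) r2 -> const_row_sum (dlsubmx A) r2 ->
    const_col_sum (ursubmx A) c2 -> const_col_sum (dlsubmx A) c2 ->
    Qmx G p *m A *m Qmx G q = A.
Proof.
move=> r11 r22 c11 c22 r12 r21 c12 c21.
have avg1 := avg_col_row_sum hp hq r11 c11.
have avg2 := avg_col_row_sum hp hq r12 c12.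
rewrite !QmxE Qmx_of_conj ?avg_mx_idem //.
apply: (@Qmx_of_mul_commute _ _ _ _ _ _
          (const_mx (p%:R^-1 *: c1)) (const_mx (p%:R^-1 *: c2))).
- exact: mul_avg_mx.
- exact: mul_avg_mx.
- by rewrite avg1; apply: mul_mx_avg.
- by rewrite avg1; apply: mul_mx_avg.
- exact: mul_avg_mx.
- exact: mul_avg_mx.
- by rewrite avg2; apply: mul_mx_avg.
- by rewrite avg2; apply: mul_mx_avg.
Qed.
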